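(* In the standing setting, $g(Q)=Q'$, i.e. $\{g(A): A\in Q\}$ equals the set of nonempty down-sets of $(P',\preceq')$.
   Context: Standing setting: $(P,\preceq)$ is a finite poset with a bottom and a top element; $f:P\to P'$ is a surjective map onto $P'=f(P)$; $f^{-1}(a')=\{a\in P: f(a)=a'\}$; the relation $\preceq'$ on $P'$ is defined by $b'\preceq' a'$ iff there exist $a\in f^{-1}(a')$, $b\in f^{-1}(b')$ with $b\preceq a$. Assume the three conditions: (D) for all $a',b'\in P'$ with $b'\preceq' a'$ and every $a\in f^{-1}(a')$ there is $b\in f^{-1}(b')$ with $b\preceq a$; (U) for all $a',b'\in P'$ with $b'\preceq' a'$ and every $b\in f^{-1}(b')$ there is $a\in f^{-1}(a')$ with $b\preceq a$; (S) for all $a,b,c\in P$, if $c\preceq b\preceq a$ and $f(c)=f(a)$ then $f(b)=f(a)$. (Then $(P',\preceq')$ is a poset.) A down-set of a poset is a subset $A$ such that $a\in A$ and $b\preceq a$ imply $b\in A$. $Q$ is the set of nonempty down-sets of $(P,\preceq)$ and $Q'$ the set of nonempty down-sets of $(P',\preceq')$, each ordered by inclusion. $g:2^P\to 2^{P'}$ is $g(A)=\{f(a):a\in A\}$; we write $g(Q)=\{g(A):A\in Q\}$. *)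

From mathcomp Require Import all_boot.
Set Implicit Arguments. Unset Strict Implicit. Unset Printing Implicit Defensive.

Definition is_poset (T : finType) (le : rel T) : Prop :=
  [/\ reflexive le, antisymmetric le & transitive le].

Definition lift_rel (P P' : finType) (f : P -> P') (le : rel P) : rel P' :=
  fun b' a' => [exists a : P, exists b : P, [&& f a == a', f b == b' & le b a]].

Definition downset (T : finType) (le : rel T) (A : {set T}) : bool :=
  [forall a in A, forall b : T, le b a ==> (b \in A)].

Definition nonempty_downsets (T : finType) (le : rel T) : {set {set T}} :=
  [set A : {set T} | (A != set0) && downset le A].

Definition gmap (P P' : finType) (f : P -> P') (A : {set P}) : {set P'} := f @: A.

Definition cond_D (P P' : finType) (f : P -> P') (le : rel P) : Prop :=
  forall a' b' : P', lift_rel f le b' a' ->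
    forall a : P, f a = a' -> exists b : P, f b = b' /\ le b a.
Definition cond_U (P P' : finType) (f : P -> P') (le : rel P) : Prop :=
  forall a' b' : P', lift_rel f le b' a' ->
    forall b : P, f b = b' -> exists a : P, f a = a' /\ le b a.
Definition cond_S (P P' : finType) (f : P -> P') (le : rel P) : Prop :=
  forall a b c : P, le c b -> le b a -> f c = f a -> f b = f a.

From mathcomp Require Import all_boot.

(* Nonempty down-sets of P are carried by g onto the nonempty down-sets of P'.
   - Image: if A is a down-set of P then f(A) is a down-set of P'; given
     b' <=' f(a) with a in A, condition (D) supplies b in f^-1(b') below a,
     so b lies in A and b' = f(b) lies in f(A).
   - Preimage: for any down-set B of P', the preimage f^-1(B) is a down-set of
     P, since b <= a gives f(b) <=' f(a) directly from the definition of <='.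
   - Surjectivity of f gives f(f^-1(B)) = B, and it also makes preimages of
     nonempty sets nonempty, while images of nonempty sets are trivially so.
   Hence g(Q) is contained in Q' by the first point, and every B in Q' is
   g(f^-1(B)) with f^-1(B) in Q by the other two.  Only (D) and surjectivity
   are used. *)

Lemma downsetP (T : finType) (leT : rel T) (A : {set T}) :
  reflect (forall a b, a \in A -> leT b a -> b \in A) (downset leT A).
Proof.
apply: (iffP forallP) => [hA a b aA ba | hA a].
  by move/implyP/(_ aA)/forallP/(_ b)/implyP: (hA a); apply.
by apply/implyP=> aA; apply/forallP=> b; apply/implyP; apply: hA.
Qed.

Section Downsets.
Variables (P P' : finType) (le : rel P) (f : P -> P').

Lemma lift_rel_image {a b} : le b a -> lift_rel f le (f b) (f a).
Proof. by move=> ba; apply/existsP; exists a; apply/existsP; exists b; rewrite !eqxx. Qed.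

Lemma image_downset (A : {set P}) :
  cond_D f le -> downset le A -> downset (lift_rel f le) (gmap f A).
Proof.
move=> hD /downsetP dA; apply/downsetP => _ b' /imsetP[a aA ->] hb'.
have [b [<- ba]] := hD _ _ hb' a erefl.
by apply: imset_f; apply: dA ba.
Qed.

Lemma preimage_downset (B : {set P'}) :
  downset (lift_rel f le) B -> downset le (f @^-1: B).
Proof.
move=> /downsetP dB; apply/downsetP => a b; rewrite !inE => aB ba.
exact: dB _ _ aB (lift_rel_image ba).
Qed.

Hypothesis hsurj : forall a' : P', exists a : P, f a = a'.

Lemma image_preimage (B : {set P'}) : gmap f (f @^-1: B) = B.
Proof.
apply/setP => a'; apply/imsetP/idP => [[a] | a'B].
  by rewrite inE => aB ->.
by have [a fa] := hsurj a'; exists a; rewrite // inE fa.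
Qed.

Lemma preimage_neq0 (B : {set P'}) : B != set0 -> f @^-1: B != set0.
Proof. by apply: contraNN => /eqP B0; rewrite -(image_preimage B) B0 /gmap imset0. Qed.

End Downsets.

Theorem lemma4 (P P' : finType) (le : rel P) (f : P -> P')
  (hposet : is_poset le)
  (hbot : exists bot : P, forall x : P, le bot x)
  (htop : exists top : P, forall x : P, le x top)
  (hsurj : forall a' : P', exists a : P, f a = a')
  (hD : cond_D f le) (hU : cond_U f le) (hS : cond_S f le) :
  [set gmap f A | A in nonempty_downsets le] = nonempty_downsets (lift_rel f le).
Proof.
apply/setP => B; apply/imsetP/idP => [[A] | ].
  rewrite !inE => /andP[An dA] ->.
  by rewrite /gmap imset_eq0 An image_downset.
rewrite inE => /andP[Bn dB].
exists (f @^-1: B); last by rewrite image_preimage.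
by rewrite inE preimage_neq0 // preimage_downset.
Qed.
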